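(* In the computational model where dictionary lookup for a key of length $r$ costs $O(r)$ expected time, for a query Pauli string $P$ of weight $w$, computing \[ Z=\sum_{A\subseteq\operatorname{supp}(P)}(-2)^{|A|}\sum_{a\in\mathcal{L}_P(A)}D[(A,a)],\qquad \text{and returning } (N-Z)/2, \] by enumerating all $A\subseteq\operatorname{supp}(P)$ and all $a\in\mathcal{L}_P(A)$, performs exactly $3^w$ dictionary lookups and takes $O(w3^w)$ expected time. Here $\mathcal{L}_P(A)=\{a:A\to\{X,Y,Z\}: a(j)\neq P_j\ \forall j\in A\}$.
   Context: A phase-free $n$-qubit Pauli string is a word $P=(P_1,\dots,P_n)\in\{I,X,Y,Z\}^n$, stored sparsely as the pairs $(j,P_j)$ for $j$ in its support $\operatorname{supp}(P)=\{j:P_j\neq I\}$; its weight is $w=|\operatorname{supp}(P)|$. $D$ is a dictionary whose keys are labeled patterns $(A,a)$ with $A$ a set of qubit positions and $a:A\to\{X,Y,Z\}$, of length $|A|$, mapping to integer counts (absent keys count as zero); $N$ is an integer. *)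

From HB Require Import structures.
From mathcomp Require Import all_boot all_order all_algebra.
Set Implicit Arguments. Unset Strict Implicit. Unset Printing Implicit Defensive.
Import Order.TTheory GRing.Theory Num.Theory.

Inductive pauli := PI | PX | PY | PZ.

Definition pauli_to_ord (p : pauli) : 'I_4 :=
  match p with PI => inord 0 | PX => inord 1 | PY => inord 2 | PZ => inord 3 end.
Definition ord_to_pauli (i : 'I_4) : pauli :=
  match val i with 0 => PI | 1 => PX | 2 => PY | _ => PZ end.
Lemma pauli_to_ordK : cancel pauli_to_ord ord_to_pauli.
Proof. by case; rewrite /ord_to_pauli /= inordK. Qed.
HB.instance Definition _ := Finite.copy pauli (can_type pauli_to_ordK).

(* A phase-free n-qubit Pauli string.  A labeled pattern (A,a) with
   A a set of positions and a : A -> {X,Y,Z} is identified with the Pauli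
   string whose support is A and which agrees with a on A. *)
Definition pstring (n : nat) := {ffun 'I_n -> pauli}.

Definition supp n (P : pstring n) : {set 'I_n} := [set j | P j != PI].

Definition LP n (P : pstring n) (A : {set 'I_n}) : {set pstring n} :=
  [set k : pstring n | (supp k == A) && [forall j in A, k j != P j]].

Definition Zsum n (P : pstring n) (D : pstring n -> int) : int :=
  (\sum_(A : {set 'I_n} | A \subset supp P)
     (-2) ^+ #|A| * \sum_(a in LP P A) D a)%R.

Record cres := CRes { cval : int; clook : nat; ctime : nat }.

Definition others (p : pauli) : seq pauli := [seq b <- [:: PX; PY; PZ] | b != p].

Definition upd n (k : pstring n) (j : 'I_n) (b : pauli) : pstring n :=
  [ffun i => if i == j then b else k i].

(* Depth-first enumeration of all A ⊆ supp(P) and a ∈ L_P(A).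
   [s] : remaining support positions (from the sparse representation of P),
   [k] : current partial pattern, [m] : its length |A|.
   At each leaf one dictionary lookup D[k] is performed; its (expected) cost
   is [lk k]; every enumeration node and every leaf's arithmetic costs one
   unit of time. *)
Fixpoint dfs n (P : pstring n) (D : pstring n -> int) (lk : pstring n -> nat)
    (s : seq 'I_n) (k : pstring n) (m : nat) : cres :=
  match s with
  | [::] => CRes ((-2) ^+ m * D k)%R 1 (lk k + 1)
  | j :: s' =>
      let r0 := dfs P D lk s' k m in
      let rs := [seq dfs P D lk s' (upd k j b) m.+1 | b <- others (P j)] in
      CRes (cval r0 + \sum_(r <- rs) cval r)%R
           (clook r0 + sumn (map clook rs))
           (ctime r0 + sumn (map ctime rs) + 1)
  end.

Definition run_Z n (P : pstring n) D lk : cres :=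
  dfs P D lk (enum (supp P)) [ffun _ => PI] 0.

Definition run_value n (P : pstring n) D lk (N : int) : rat :=
  (((N - cval (run_Z P D lk))%:~R : rat) / 2)%R.

Definition run_lookups n (P : pstring n) D lk : nat := clook (run_Z P D lk).

(* expected total time: the control flow does not depend on lookup results,
   so by linearity of expectation it is the sum of expected step costs *)
Definition run_time n (P : pstring n) D lk : nat := (ctime (run_Z P D lk)).+1.

From Pilot Require Import Defs.
From HB Require Import structures.
From mathcomp Require Import all_boot all_order all_algebra.
From mathcomp Require Import zify.
Set Implicit Arguments. Unset Strict Implicit.

(* At a support position j the search branches into three
   children: j is left out of A (letter I), or a(j) is one of the two letters
   different from P_j.  Hence the leaves of the recursion tree are in bijection
   with the pairs (A, a), a leaf reached with pattern a of length |A| contributes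
   (-2)^|A| D[a], and there are exactly 3^w of them.  Each leaf costs O(|A| + 1)
   <= O(w) and the internal nodes are fewer than the leaves, so the total time
   is O(w 3^w). *)

Lemma pauli_eqE (a b : pauli) :
  (a == b) = match a, b with PI, PI | PX, PX | PY, PY | PZ, PZ => true | _, _ => false end.
Proof. by case: a; case: b => //=; apply/eqP. Qed.

Lemma othersE (p : pauli) :
  others p = match p with
             | PI => [:: PX; PY; PZ] | PX => [:: PY; PZ]
             | PY => [:: PX; PZ] | PZ => [:: PX; PY] end.
Proof. by case: p; rewrite /others /= !pauli_eqE. Qed.

Lemma others_pair (p : pauli) : p != PI -> exists b1 b2, others p = [:: b1; b2].
Proof. by rewrite othersE pauli_eqE; case: p => // _; do 2 eexists. Qed.

Lemma mem_PI_others (p a : pauli) : p != PI -> (a \in PI :: others p) = (a != p).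
Proof. by rewrite othersE; case: p; case: a; rewrite /= !inE !pauli_eqE. Qed.

Lemma uniq_PI_others (p : pauli) : uniq (PI :: others p).
Proof. by rewrite othersE; case: p; rewrite /= !inE !pauli_eqE. Qed.

Lemma others_neq_PI (p b : pauli) : b \in others p -> b != PI.
Proof. by rewrite othersE; case: p; case: b; rewrite /= !inE !pauli_eqE. Qed.

Lemma card_supp_upd n (k : pstring n) (j : 'I_n) (b : pauli) :
  #|supp (upd k j b)| <= #|supp k|.+1.
Proof.
apply: leq_trans (_ : #|j |: supp k| <= _); last by rewrite cardsU1; case: (_ \notin _).
by apply: subset_leq_card; apply/subsetP => i; rewrite !inE ffunE; case: (i == j).
Qed.

Lemma card_supp_updPI n (k : pstring n) (j : 'I_n) (b : pauli) :
  k j = PI -> b != PI -> #|supp (upd k j b)| = #|supp k|.+1.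
Proof.
move=> kj bPI; have jk : j \notin supp k by rewrite inE negbK kj.
suff -> : supp (upd k j b) = j |: supp k by rewrite cardsU1 jk.
by apply/setP => i; rewrite !inE ffunE; case: (eqVneq i j) => [->|] //=; rewrite bPI.
Qed.

Lemma upd_id n (k : pstring n) (j : 'I_n) : upd k j (k j) = k.
Proof. by apply/ffunP => i; rewrite ffunE; case: eqP => [->|]. Qed.

Lemma card_supp_PI n : #|supp ([ffun _ => PI] : pstring n)| = 0.
Proof. by apply/eqP; rewrite cards_eq0; apply/eqP/setP => i; rewrite !inE ffunE eqxx. Qed.

Section DepthFirstSearch.
Variables (n : nat) (P : pstring n) (D : pstring n -> int) (lk : pstring n -> nat).

Local Notation dfs := (Defs.dfs P D lk).

Definition dfs_leaf (s : seq 'I_n) (k k' : pstring n) : bool :=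
  [forall i, if i \in s then k' i \in PI :: others (P i) else k' i == k i].

Lemma dfs_leaf_nil (k k' : pstring n) : dfs_leaf [::] k k' = (k' == k).
Proof.
apply/forallP/eqP => [leaf | ->]; last by move=> i; rewrite eqxx.
by apply/ffunP => i; apply/eqP/leaf.
Qed.

Lemma dfs_leaf_cons (j : 'I_n) s (k k' : pstring n) (b : pauli) :
  j \notin s -> b \in PI :: others (P j) ->
  dfs_leaf s (upd k j b) k' = dfs_leaf (j :: s) k k' && (k' j == b).
Proof.
move=> js bj; apply/forallP/andP => [leaf | [/forallP leaf /eqP k'j] i].
  have k'j : k' j == b by have := leaf j; rewrite (negbTE js) ffunE eqxx.
  split=> //; apply/forallP => i; have := leaf i; rewrite (in_cons j s i) ffunE.
  by case: (eqVneq i j) => [-> _ | _ //] /=; rewrite (eqP k'j).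
have := leaf i; rewrite (in_cons j s i) ffunE.
by case: (eqVneq i j) => [-> _ | _ //] /=; rewrite (negbTE js) k'j.
Qed.

Lemma cval_dfs s (k : pstring n) : uniq s -> {in s, forall j, k j = PI} ->
  cval (dfs s k #|supp k|) = (\sum_(k' | dfs_leaf s k k') (-2) ^+ #|supp k'| * D k')%R.
Proof.
elim: s k => [|j s IH] k /=.
  by move=> _ _; rewrite (big_pred1 k) // => k'; rewrite dfs_leaf_nil.
case/andP=> js us kPI; have kj : k j = PI by rewrite kPI ?mem_head.
have kPIs : {in s, forall i, k i = PI} by move=> i si; rewrite kPI // in_cons si orbT.
have updPI b : {in s, forall i, upd k j b i = PI}.
  by move=> i si; rewrite ffunE; case: eqP => [eij|_]; [rewrite -eij si in js | exact: kPIs].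
have branch b : b \in PI :: others (P j) ->
    (\sum_(k' | dfs_leaf (j :: s) k k' && (k' j == b)) (-2) ^+ #|supp k'| * D k')%R =
    (\sum_(k' | dfs_leaf s (upd k j b) k') (-2) ^+ #|supp k'| * D k')%R.
  by move=> bj; apply: eq_bigl => k'; rewrite dfs_leaf_cons.
rewrite (partition_big (fun k' : pstring n => k' j) (fun b => b \in PI :: others (P j))); last first.
  by move=> k' /forallP/(_ j); rewrite mem_head.
rewrite -big_uniq ?uniq_PI_others // big_cons big_map branch ?mem_head //.
rewrite -kj upd_id IH //; congr (_ + _)%R; apply: eq_big_seq => b bj.
rewrite branch ?in_cons ?bj ?orbT // -IH //.
by rewrite card_supp_updPI // (others_neq_PI bj).
Qed.

Lemma clook_dfs s (k : pstring n) (m : nat) :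
  all (fun j => P j != PI) s -> clook (dfs s k m) = 3 ^ size s.
Proof.
elim: s k m => [|j s IH] k m //= /andP [Pj sP].
by have [b1 [b2 ->]] := others_pair Pj; rewrite /= !IH // expnS !mulSn mul0n.
Qed.

Variable c : nat.
Hypothesis lk_bound : forall k : pstring n, lk k <= c * (#|supp k|).+1.

Lemma ctime_dfs s (k : pstring n) (m : nat) : all (fun j => P j != PI) s ->
  (ctime (dfs s k m)).+1 <= (c * (#|supp k| + size s).+1 + 2) * 3 ^ size s.
Proof.
elim: s k m => [|j s IH] k m /=.
  by move=> _; rewrite addn0 muln1 addn1 addn2 !ltnS; exact: lk_bound.
case/andP=> Pj sP; have [b1 [b2 ->]] := others_pair Pj.
(* [+ 2]: one unit for the leaf's arithmetic and one for its share of the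
   internal nodes, which are fewer than the leaves. *)
set B := c * (#|supp k| + (size s).+1).+1 + 2.
have child k' m' : #|supp k'| <= #|supp k|.+1 -> (ctime (dfs s k' m')).+1 <= B * 3 ^ size s.
  move=> k'k; apply: leq_trans (IH _ _ sP) _; apply: leq_mul => //.
  by rewrite leq_add2r; apply: leq_mul => //; lia.
have := child k m (leqnSn _).
have := child _ m.+1 (card_supp_upd k j b1); have := child _ m.+1 (card_supp_upd k j b2).
by rewrite /= expnS mulnCA; lia.
Qed.

End DepthFirstSearch.

Lemma root_choiceE (p q : pauli) :
  (if p != PI then q \in PI :: others p else q == PI) = (q != PI) ==> (p != PI) && (q != p).
Proof. by case: p; case: q; rewrite othersE /= !inE !pauli_eqE. Qed.

Lemma dfs_leaf_root n (P : pstring n) (a : pstring n) :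
  dfs_leaf P (enum (supp P)) [ffun _ => PI] a =
  (supp a \subset supp P) && (a \in LP P (supp a)).
Proof.
rewrite inE eqxx /=.
transitivity [forall j, (a j != PI) ==> (P j != PI) && (a j != P j)].
  by apply: eq_forallb => j; rewrite mem_enum ffunE -root_choiceE !inE.
apply/forallP/andP => [leaf | [/subsetP sub /forallP neq] j].
  split; [apply/subsetP => j | apply/forallP => j; apply/implyP]; rewrite !inE => aj;
    by case/andP: (implyP (leaf j) aj).
apply/implyP => aj; have ja : j \in supp a by rewrite inE.
by have := sub j ja; rewrite inE => ->; apply: (implyP (neq j)).
Qed.

Lemma cval_run_Z n (P : pstring n) (D : pstring n -> int) (lk : pstring n -> nat) :
  cval (run_Z P D lk) = Zsum P D.
Proof.
rewrite /run_Z -(card_supp_PI n) cval_dfs ?enum_uniq //; last by move=> j _; rewrite ffunE.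
rewrite /Zsum (partition_big (fun a : pstring n => supp a) (fun A => A \subset supp P)); last first.
  by move=> a; rewrite dfs_leaf_root => /andP[].
apply: eq_bigr => A AP; rewrite big_distrr /=; apply: eq_big => [a | a /andP[_ /eqP <-] //].
rewrite dfs_leaf_root andbC; case: (eqVneq (supp a) A) => [-> | neA] /=; first by rewrite AP.
by rewrite inE (negbTE neA).
Qed.

Theorem lemma5 :
  forall c : nat, exists C : nat,
  forall (n : nat) (lk : pstring n -> nat),
    (forall k : pstring n, lk k <= c * (#|supp k|).+1) ->
  forall (P : pstring n) (D : pstring n -> int) (N : int),
    let w := #|supp P| in
    [/\ run_value P D lk N = (((N - Zsum P D)%R%:~R : rat) / 2)%R,
        run_lookups P D lk = 3 ^ w
      & run_time P D lk <= C * maxn w 1 * 3 ^ w].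
Proof.
move=> c; exists (2 * c + 2) => n lk lk_bound P D N w.
have Pnz : all (fun j => P j != PI) (enum (supp P)) by apply/allP => j; rewrite mem_enum inE.
have size_w : size (enum (supp P)) = w by rewrite -cardE.
split.
- by rewrite /run_value cval_run_Z.
- by rewrite /run_lookups clook_dfs // size_w.
- apply: leq_trans (ctime_dfs D lk_bound _ _ Pnz) _.
  rewrite card_supp_PI add0n size_w; apply: leq_mul => //.
  have := leq_maxl w 1; have := leq_maxr w 1; move: (maxn w 1) => M M1 Mw.
  by rewrite mulnDl [2 * c]mulnC -mulnA; apply: leq_add; [apply: leq_mul|]; lia.
Qed.
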